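(* Let $M$ be a circulant matrix over $\mathbb{Z}_4+u\mathbb{Z}_4$ of order $n-1$, and let $\alpha,\beta,\gamma\in\mathbb{Z}_4+u\mathbb{Z}_4$ with $\gamma=\pm\beta$. Let $G=[I_n\,|\,B]$, where $B$ is the $n\times n$ matrix whose first row is $(\alpha,\beta,\beta,\dots,\beta)$ and whose remaining rows are $(\gamma\,|\,\text{row } i \text{ of } M)$ for $i=1,\dots,n-1$, i.e. $B=\begin{pmatrix}\alpha & \beta\cdots\beta\\ \gamma\mathbf{1}^T & M\end{pmatrix}$ with $\mathbf{1}$ the all-ones vector of length $n-1$. Then $G$ generates a formally self-dual code of length $2n$ over $\mathbb{Z}_4+u\mathbb{Z}_4$ whose Gray image under $\phi$ is a formally self-dual code over $\mathbb{Z}_4$ of length $4n$.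
   Context: $\mathbb{Z}_4+u\mathbb{Z}_4$ is the commutative ring of characteristic $4$ with $u^2=0$. A linear code over a ring $R$ is an $R$-submodule of $R^N$; duals are taken with respect to the Euclidean inner product $\sum_i x_iy_i$ in $R$. Lee weight on $\mathbb{Z}_4$: $0,1,2,1$ for $0,1,2,3$; on $\mathbb{Z}_4+u\mathbb{Z}_4$: $w_L(a+ub)=w_L(b)+w_L(a+b)$; extended additively to vectors. A linear code (over either ring) is formally self-dual if it has the same Lee weight enumerator as its dual. The Gray map $\phi:(\mathbb{Z}_4+u\mathbb{Z}_4)^{N}\to\mathbb{Z}_4^{2N}$ is $\phi(\overline{a}+u\overline{b})=(\overline{b},\overline{a}+\overline{b})$ for $\overline{a},\overline{b}\in\mathbb{Z}_4^N$. A circulant matrix is one in which each row is the cyclic right shift of the previous row. *)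

From mathcomp Require Import all_boot all_order all_algebra.
Set Implicit Arguments. Unset Strict Implicit. Unset Printing Implicit Defensive.
Import GRing.Theory.
Local Open Scope ring_scope.

(* The ring Z4 + u Z4 (u^2 = 0): the pair (a, b) represents a + u b. *)
Definition R4u : finType := ('Z_4 * 'Z_4)%type.
Definition radd (x y : R4u) : R4u := (x.1 + y.1, x.2 + y.2).
Definition ropp (x : R4u) : R4u := (- x.1, - x.2).
Definition rmul (x y : R4u) : R4u := (x.1 * y.1, x.1 * y.2 + x.2 * y.1).
Definition rzero : R4u := (0, 0).
Definition rone : R4u := (1, 0).

Definition leeZ4 (a : 'Z_4) : nat :=
  match val a with 0 => 0 | 1 => 1 | 2 => 2 | _ => 1 end%N.
Definition leeR (x : R4u) : nat := addn (leeZ4 x.2) (leeZ4 (x.1 + x.2)%R).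
Definition wtR N (v : {ffun 'I_N -> R4u}) : nat := (\sum_(i < N) leeR (v i))%N.
Definition wtZ N (v : {ffun 'I_N -> 'Z_4}) : nat := (\sum_(i < N) leeZ4 (v i))%N.

Definition ipR N (x y : {ffun 'I_N -> R4u}) : R4u :=
  \big[radd/rzero]_(i < N) rmul (x i) (y i).
Definition ipZ N (x y : {ffun 'I_N -> 'Z_4}) : 'Z_4 := \sum_(i < N) x i * y i.
Definition dualR N (C : {set {ffun 'I_N -> R4u}}) : {set {ffun 'I_N -> R4u}} :=
  [set y | [forall x in C, ipR x y == rzero]].
Definition dualZ N (C : {set {ffun 'I_N -> 'Z_4}}) : {set {ffun 'I_N -> 'Z_4}} :=
  [set y | [forall x in C, ipZ x y == 0]].

Definition fsdR N (C : {set {ffun 'I_N -> R4u}}) : Prop :=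
  forall w : nat, #|[set c in C | wtR c == w]| = #|[set c in dualR C | wtR c == w]|.
Definition fsdZ N (C : {set {ffun 'I_N -> 'Z_4}}) : Prop :=
  forall w : nat, #|[set c in C | wtZ c == w]| = #|[set c in dualZ C | wtZ c == w]|.

Definition codeR k N (G : 'M[R4u]_(k, N)) : {set {ffun 'I_N -> R4u}} :=
  [set v : {ffun 'I_N -> R4u} | [exists x : {ffun 'I_k -> R4u},
     [forall j, v j == \big[radd/rzero]_(i < k) rmul (x i) (G i j)]]].

Definition gray N (v : {ffun 'I_N -> R4u}) : {ffun 'I_(N + N) -> 'Z_4} :=
  [ffun k => match split k with
             | inl i => (v i).2
             | inr i => (v i).1 + (v i).2 end].

Definition circulant m (M : 'M[R4u]_m) : Prop :=
  forall i j : 'I_m, (i.+1 < m)%N -> M (ordS i) (ordS j) = M i j.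

Definition idmxR n : 'M[R4u]_n := \matrix_(i < n, j < n) if i == j then rone else rzero.

Definition Bmat m (M : 'M[R4u]_m) (alpha beta gamma : R4u) : 'M[R4u]_(1 + m) :=
  block_mx (const_mx alpha : 'M_(1, 1)) (const_mx beta : 'M_(1, m))
           (const_mx gamma : 'M_(m, 1)) M.

Definition Gmat m (M : 'M[R4u]_m) (alpha beta gamma : R4u)
  : 'M[R4u]_(1 + m, (1 + m) + (1 + m)) :=
  row_mx (idmxR (1 + m)) (Bmat M alpha beta gamma).

From HB Require Import structures.
From mathcomp Require Import all_boot all_order all_algebra ring.
Set Implicit Arguments. Unset Strict Implicit. Unset Printing Implicit Defensive.
Import GRing.Theory.
Local Open Scope ring_scope.

(* The code generated by [I | B] consists of the words (t, tB) and its dual of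
   the words (-By, y).  If B P = P B^T for a signed permutation matrix P, which
   is a Lee isometry, then t |-> (-B P t, P t) maps the code onto its dual and
   preserves the Lee weight wt t + wt (tB).  For the bordered circulant B, P
   fixes the border index (with sign +-1 as gamma = +-beta) and acts on the
   circulant block by a |-> -a, under which a circulant matrix is symmetric.
   The Gray map is a Lee isometry, and since a linear code is closed under
   multiplication by u, a Z4-word is orthogonal to the Gray image of C exactly
   when a Lee-isometric image of it is orthogonal to C. *)

(* Matrix
   entries must be cast to Z4u before multiplying: on the bare pair type the
   canonical ring is the componentwise product. *)
Definition Z4u : Type := ('Z_4 * 'Z_4)%type.
HB.instance Definition _ := Finite.on Z4u.
HB.instance Definition _ := GRing.Zmodule.on Z4u.

Lemma Z4u_mulA : associative (rmul : Z4u -> Z4u -> Z4u).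
Proof. by move=> [a b] [c d] [e f]; congr pair => /=; ring. Qed.
Lemma Z4u_mulC : commutative (rmul : Z4u -> Z4u -> Z4u).
Proof. by move=> [a b] [c d]; congr pair => /=; ring. Qed.
Lemma Z4u_mul1 : left_id (rone : Z4u) rmul.
Proof. by move=> [a b]; congr pair => /=; ring. Qed.
Lemma Z4u_mulDl : left_distributive (rmul : Z4u -> Z4u -> Z4u) +%R.
Proof. by move=> [a b] [c d] [e f]; congr pair => /=; ring. Qed.
HB.instance Definition _ :=
  GRing.Zmodule_isComNzRing.Build Z4u Z4u_mulA Z4u_mulC Z4u_mul1 Z4u_mulDl isT.

Local Notation vec n := {ffun 'I_n -> Z4u}.

Lemma ipRE N (x y : vec N) : ipR x y = \sum_(k < N) x k * y k.
Proof. by []. Qed.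

Lemma split_lshift m n (i : 'I_m) : split (lshift n i) = inl i.
Proof. exact: (unsplitK (inl _ i)). Qed.

Lemma split_rshift m n (i : 'I_n) : split (rshift m i) = inr i.
Proof. exact: (unsplitK (inr _ i)). Qed.

Lemma leeZ4N (a : 'Z_4) : leeZ4 (- a) = leeZ4 a.
Proof. by case: a => [[|[|[|[|k]]]] ?]. Qed.

Lemma leeRN (x : Z4u) : leeR (- x) = leeR x.
Proof. by case: x => a b; rewrite /leeR /= -opprD !leeZ4N. Qed.

Lemma leeR_sign (e x : Z4u) : e = 1 \/ e = -1 -> leeR (e * x) = leeR x.
Proof. by case=> ->; rewrite ?mul1r // mulN1r leeRN. Qed.

Lemma card_wt_imset (A B : finType) (f : A -> B) (X : {set A})
    (wA : A -> nat) (wB : B -> nat) (w : nat) :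
  injective f -> (forall a, wB (f a) = wA a) ->
  #|[set b in f @: X | wB b == w]| = #|[set a in X | wA a == w]|.
Proof.
move=> f_inj wf; rewrite -(card_imset _ f_inj); apply: eq_card => b.
rewrite inE; apply/andP/imsetP => [[/imsetP [a aX ->]] | [a]].
  by rewrite wf => wa; exists a; rewrite // inE aX wa.
by rewrite inE => /andP [aX /eqP wa ->]; rewrite imset_f // wf wa.
Qed.

Definition vmul n (t : vec n) (B : 'M[R4u]_n) : vec n :=
  [ffun j => \sum_i t i * (B i j : Z4u)].
Definition mulv n (B : 'M[R4u]_n) (y : vec n) : vec n :=
  [ffun i => \sum_j (B i j : Z4u) * y j].

Definition sysword n (B : 'M[R4u]_n) (t : vec n) : vec (n + n) :=
  [ffun k => match split k with inl i => t i | inr j => vmul t B j end].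
Definition sysdual n (B : 'M[R4u]_n) (y : vec n) : vec (n + n) :=
  [ffun k => match split k with inl i => - mulv B y i | inr j => y j end].

Section Systematic.
Variables (n : nat) (B : 'M[R4u]_n).

Lemma sysword_l t i : sysword B t (lshift n i) = t i.
Proof. by rewrite ffunE split_lshift. Qed.
Lemma sysword_r t j : sysword B t (rshift n j) = vmul t B j.
Proof. by rewrite ffunE split_rshift. Qed.
Lemma sysdual_l y i : sysdual B y (lshift n i) = - mulv B y i.
Proof. by rewrite ffunE split_lshift. Qed.
Lemma sysdual_r y j : sysdual B y (rshift n j) = y j.
Proof. by rewrite ffunE split_rshift. Qed.

Lemma sysword_inj : injective (sysword B).
Proof. by move=> t1 t2 eq_t; apply/ffunP => i; rewrite -!(sysword_l _ i) eq_t. Qed.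
Lemma sysdual_inj : injective (sysdual B).
Proof. by move=> y1 y2 eq_y; apply/ffunP => i; rewrite -!(sysdual_r _ i) eq_y. Qed.

Lemma wtR_sysword t : wtR (sysword B t) = (wtR t + wtR (vmul t B))%N.
Proof.
by rewrite /wtR big_split_ord; congr addn; apply: eq_bigr => i _;
  rewrite ?sysword_l ?sysword_r.
Qed.

Lemma wtR_sysdual y : wtR (sysdual B y) = (wtR (mulv B y) + wtR y)%N.
Proof.
by rewrite /wtR big_split_ord; congr addn; apply: eq_bigr => i _;
  rewrite ?sysdual_l ?leeRN ?sysdual_r.
Qed.

Lemma codeR_systematic : codeR (row_mx (idmxR n) B) = sysword B @: setT.
Proof.
have row_mxE (x : vec n) k :
    \sum_i x i * row_mx (idmxR n) B i k = sysword B x k.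
  rewrite -(splitK k); case: (split k) => [i | j] /=.
    under eq_bigr do rewrite row_mxEl mxE.
    rewrite sysword_l (bigD1 i) //= eqxx big1 ?addr0 ?mulr1 // => l /negbTE ->.
    exact: mulr0.
  by rewrite sysword_r ffunE; apply: eq_bigr => l _; rewrite row_mxEr.
apply/setP => v; rewrite inE; apply/existsP/imsetP => [[x /forallP v_x] | [x _ ->]].
  by exists x; rewrite ?inE //; apply/ffunP => k; rewrite (eqP (v_x k)) row_mxE.
by exists x; apply/forallP => k; rewrite row_mxE.
Qed.

Lemma ipR_sysword t (z : vec (n + n)) :
  ipR (sysword B t) z =
  \sum_i t i * (z (lshift n i) + mulv B [ffun j => z (rshift n j)] i).
Proof.
rewrite ipRE big_split_ord /=.
under eq_bigr do rewrite sysword_l.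
under [X in _ + X]eq_bigr do rewrite sysword_r ffunE mulr_suml.
rewrite exchange_big -big_split; apply: eq_bigr => i _ /=.
rewrite mulrDr ffunE mulr_sumr; congr (_ + _); apply: eq_bigr => j _.
by rewrite ffunE mulrA.
Qed.

Lemma dualR_systematic : dualR (sysword B @: setT) = sysdual B @: setT.
Proof.
apply/setP => z; rewrite inE; apply/forallP/imsetP => [z_dual | [y _ ->] x].
  exists [ffun j => z (rshift n j)]; first by rewrite inE.
  apply/ffunP => k; rewrite -(splitK k); case: (split k) => [i | j] /=; last first.
    by rewrite sysdual_r ffunE.
  have := z_dual (sysword B [ffun l => if l == i then 1 else 0]).
  rewrite imset_f ?inE //= ipR_sysword (bigD1 i) //= big1 => [|l /negbTE l_i].
    rewrite sysdual_l [X in X * _]ffunE eqxx mul1r addr0 => ?.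
    by apply/eqP; rewrite -addr_eq0.
  by rewrite ffunE l_i mul0r.
apply/implyP => /imsetP [t _ ->]; apply/eqP.
rewrite ipR_sysword big1 // => i _.
have -> : [ffun j => sysdual B y (rshift n j)] = y.
  by apply/ffunP => j; rewrite ffunE sysdual_r.
by rewrite sysdual_l addNr mulr0.
Qed.

Lemma fsdR_systematic (sigma : vec n -> vec n) :
  injective sigma -> (forall t, wtR (sigma t) = wtR t) ->
  (forall t, wtR (mulv B (sigma t)) = wtR (vmul t B)) ->
  fsdR (codeR (row_mx (idmxR n) B)).
Proof.
move=> sigma_inj wt_sigma wt_mulv w.
have [sigma' _ sigmaK'] := injF_bij sigma_inj.
have sigmaT : sigma @: setT = setT.
  by apply/setP => t; rewrite inE -[t]sigmaK' imset_f.
have sd_inj : injective (sysdual B \o sigma) by apply: inj_comp sysdual_inj _.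
rewrite codeR_systematic dualR_systematic -{2}sigmaT -imset_comp.
rewrite (card_wt_imset _ _ sysword_inj wtR_sysword).
rewrite (card_wt_imset _ _ sd_inj (fun t => erefl)).
by apply: eq_card => t; rewrite !inE /= wtR_sysdual wt_mulv wt_sigma addnC.
Qed.
End Systematic.

Section SignedPermutation.
Variables (n : nat) (B : 'M[R4u]_n) (pi : 'I_n -> 'I_n) (s : 'I_n -> Z4u).
Hypotheses (piK : involutive pi) (s_sign : forall i, s i = 1 \/ s i = -1).

Definition signed_perm (t : vec n) : vec n := [ffun j => s j * t (pi j)].

Lemma signed_perm_inj : injective signed_perm.
Proof.
move=> t1 t2 /ffunP eq_t; apply/ffunP => j; rewrite -[j]piK.
have := eq_t (pi j); rewrite !ffunE.
by case: (s_sign (pi j)) => ->; rewrite ?mul1r // !mulN1r => /oppr_inj.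
Qed.

Lemma wtR_signed_perm t : wtR (signed_perm t) = wtR t.
Proof.
rewrite /wtR (reindex_inj (inv_inj piK)).
by apply: eq_bigr => j _; rewrite ffunE leeR_sign // piK.
Qed.

(* With P the signed permutation matrix of [signed_perm], this says B P = P B^T. *)
Hypothesis B_sym : forall i l, (B i (pi l) : Z4u) * s (pi l) = s i * B l (pi i).

Lemma mulv_signed_perm t i : mulv B (signed_perm t) i = s i * vmul t B (pi i).
Proof.
rewrite !ffunE (reindex_inj (inv_inj piK)) mulr_sumr.
by apply: eq_bigr => l _; rewrite ffunE piK mulrA B_sym -mulrA [_ * t l]mulrC.
Qed.

Lemma wtR_mulv_signed_perm t : wtR (mulv B (signed_perm t)) = wtR (vmul t B).
Proof.
rewrite /wtR (reindex_inj (inv_inj piK)).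
by apply: eq_bigr => i _; rewrite mulv_signed_perm leeR_sign // piK.
Qed.

Lemma fsdR_signed_sym : fsdR (codeR (row_mx (idmxR n) B)).
Proof.
exact: fsdR_systematic signed_perm_inj wtR_signed_perm wtR_mulv_signed_perm.
Qed.

End SignedPermutation.

Lemma ordS_addZp1 m (x : 'I_m.+1) : ordS x = x + Zp1.
Proof. by apply/val_inj; rewrite /= modnDmr addn1. Qed.

Lemma circulantE m (M : 'M[R4u]_m.+1) :
  circulant M -> forall i j, M i j = M 0 (j - i).
Proof.
move=> M_circ i j; move: {2}(val i) (erefl (val i)) => k.
elim: k i j => [|k IHk] i j i_k; first by rewrite (_ : i = 0) ?subr0 //; apply/val_inj.
have lt_k : (k < m.+1)%N by rewrite (leq_trans _ (ltn_ord i)) // i_k.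
have -> : i = ordS (Ordinal lt_k).
  by apply/val_inj; rewrite /= modn_small -i_k ?ltn_ord.
rewrite -[j](subrK Zp1) -ordS_addZp1 M_circ /=; last by rewrite -i_k ltn_ord.
by rewrite IHk // !ordS_addZp1 opprD addrACA subrr addr0.
Qed.

Lemma circulant_sym m (M : 'M[R4u]_m) : circulant M ->
  exists2 rho : 'I_m -> 'I_m, involutive rho & forall a b, M b (rho a) = M a (rho b).
Proof.
case: m M => [|m] M M_circ; first by exists id => [//|[]].
exists (fun a => - a) => [a | a b]; first exact: opprK.
by rewrite (circulantE M_circ b) (circulantE M_circ a) addrC.
Qed.

Definition ext0 m (rho : 'I_m -> 'I_m) (j : 'I_(1 + m)) : 'I_(1 + m) :=
  match split j with inl _ => j | inr a => rshift 1 (rho a) end.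
Definition sign0 m (eps : Z4u) (j : 'I_(1 + m)) : Z4u :=
  match split j with inl _ => eps | inr _ => 1 end.

Lemma ext0K m (rho : 'I_m -> 'I_m) : involutive rho -> involutive (ext0 rho).
Proof.
move=> rhoK j; rewrite /ext0 -(splitK j).
by case: (split j) => [i | a] /=;
  rewrite ?split_lshift ?split_rshift /= ?split_rshift ?rhoK.
Qed.

Lemma sign0_sign m (eps : Z4u) :
  eps = 1 \/ eps = -1 -> forall j : 'I_(1 + m), sign0 eps j = 1 \/ sign0 eps j = -1.
Proof. by move=> eps_pm j; rewrite /sign0; case: (split j) => // _; left. Qed.

Lemma Bmat_sym m (M : 'M[R4u]_m) (alpha beta gamma : R4u) rho (eps : Z4u) :
  (forall a b, M b (rho a) = M a (rho b)) -> eps * eps = 1 ->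
  (gamma : Z4u) = eps * beta ->
  forall i l, (Bmat M alpha beta gamma i (ext0 rho l) : Z4u) * sign0 eps (ext0 rho l) =
              sign0 eps i * Bmat M alpha beta gamma l (ext0 rho i).
Proof.
move=> M_sym eps2 gamma_eps i l; rewrite /Bmat /sign0 /ext0 -(splitK i) -(splitK l).
case: (split i) => [i0 | b]; case: (split l) => [l0 | a] /=;
  rewrite ?split_lshift ?split_rshift /=.
- by rewrite !block_mxEul !mxE mulrC.
- by rewrite block_mxEur block_mxEdl !mxE gamma_eps mulrA eps2 mul1r mulr1.
- by rewrite block_mxEdl block_mxEur !mxE gamma_eps mulrAC eps2 !mul1r.
- by rewrite !block_mxEdr mulr1 mul1r M_sym.
Qed.

Local Notation u := ((0, 1) : Z4u).

Definition scalev N (c : Z4u) (v : vec N) : vec N := [ffun j => c * v j].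

Lemma codeR_scale k N (G : 'M[R4u]_(k, N)) c v :
  v \in codeR G -> scalev c v \in codeR G.
Proof.
rewrite !inE => /existsP [x /forallP v_x]; apply/existsP; exists (scalev c x).
apply/forallP => j; rewrite ffunE (eqP (v_x j)) mulr_sumr.
by apply/eqP/eq_bigr => i _; rewrite ffunE mulrA.
Qed.

Definition gray_dual N (z : {ffun 'I_(N + N) -> 'Z_4}) : vec N :=
  [ffun i => (z (lshift N i) + z (rshift N i), - z (lshift N i))].

Section Gray.
Variable n : nat.

Lemma gray_l (v : vec n) i : gray v (lshift n i) = (v i).2.
Proof. by rewrite ffunE split_lshift. Qed.
Lemma gray_r (v : vec n) i : gray v (rshift n i) = (v i).1 + (v i).2.
Proof. by rewrite ffunE split_rshift. Qed.

Lemma gray_inj : injective (@gray n).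
Proof.
move=> v1 v2 /ffunP eq_v; apply/ffunP => i.
have := eq_v (lshift n i); have := eq_v (rshift n i).
rewrite !gray_r !gray_l; case: (v1 i) (v2 i) => [a b] [c d] /= eq_sum eq_b.
by rewrite eq_b in eq_sum *; rewrite (addIr _ eq_sum).
Qed.

Lemma wtZ_gray (v : vec n) : wtZ (gray v) = wtR v.
Proof.
rewrite /wtZ /wtR big_split_ord /= -big_split; apply: eq_bigr => i _.
by rewrite gray_l gray_r.
Qed.

Lemma wtR_gray_dual (z : {ffun 'I_(n + n) -> 'Z_4}) : wtR (gray_dual z) = wtZ z.
Proof.
rewrite /wtZ /wtR big_split_ord /= -big_split; apply: eq_bigr => i _.
by rewrite ffunE /leeR /= leeZ4N addrAC subrr add0r.
Qed.

Lemma gray_dual_bij : bijective (@gray_dual n).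
Proof.
exists (fun y : vec n =>
  [ffun k => match split k with inl i => - (y i).2 | inr i => (y i).1 + (y i).2 end]).
  move=> z; apply/ffunP => k; rewrite ffunE -(splitK k).
  case: (split k) => i /=; rewrite ?split_lshift ?split_rshift ffunE /= ?opprK //.
  by rewrite addrAC subrr add0r.
move=> y; apply/ffunP => i; rewrite !ffunE split_lshift split_rshift.
by case: (y i) => a b /=; rewrite addrCA addNr addr0 opprK.
Qed.

Definition coord_sum (x : Z4u) : 'Z_4 := x.1 + x.2.

Lemma coord_sum_sum I (r : seq I) (F : I -> Z4u) :
  coord_sum (\sum_(i <- r) F i) = \sum_(i <- r) coord_sum (F i).
Proof.
elim: r => [|i r IHr]; first by rewrite !big_nil /coord_sum addr0.
by rewrite !big_cons -IHr /coord_sum /= addrACA.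
Qed.

Lemma ipZ_gray (v : vec n) (z : {ffun 'I_(n + n) -> 'Z_4}) :
  ipZ (gray v) z = coord_sum (ipR v (gray_dual z)).
Proof.
rewrite /ipZ ipRE coord_sum_sum big_split_ord /= -big_split; apply: eq_bigr => i _.
rewrite gray_l gray_r ffunE /coord_sum /=.
by case: (v i) => a b /=; ring.
Qed.

Lemma ipR_scalev c (v y : vec n) : ipR (scalev c v) y = c * ipR v y.
Proof. by rewrite !ipRE mulr_sumr; apply: eq_bigr => i _; rewrite ffunE mulrA. Qed.

Variable C : {set vec n}.
Hypothesis C_u : {in C, forall v, scalev u v \in C}.

Lemma mem_dualZ_gray (z : {ffun 'I_(n + n) -> 'Z_4}) :
  (z \in dualZ [set gray v | v in C]) = (gray_dual z \in dualR C).
Proof.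
rewrite !inE; apply/forallP/forallP => z_dual x; apply/implyP => xC; last first.
  case/imsetP: xC => v vC ->; rewrite ipZ_gray.
  by have := z_dual v; rewrite vC => /eqP ->.
have := z_dual (gray x); rewrite imset_f //= ipZ_gray => /eqP.
(* coord_sum sees only a + b of an inner product a + u b; applied to u x it
   sees a. *)
have := z_dual (gray (scalev u x)); rewrite imset_f ?C_u //= ipZ_gray ipR_scalev.
case: (ipR x (gray_dual z)) => p q /eqP; rewrite /coord_sum /= !mul0r mul1r !add0r.
by move=> ->; rewrite add0r => ->.
Qed.

Lemma dualR_gray_dual :
  [set gray_dual z | z in dualZ [set gray v | v in C]] = dualR C.
Proof.
have [g gK gK'] := gray_dual_bij.
apply/setP => y; apply/imsetP/idP => [[z z_dual ->] | y_dual].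
  by rewrite -mem_dualZ_gray.
by exists (g y); rewrite ?gK' // mem_dualZ_gray gK'.
Qed.

Lemma fsdZ_gray : fsdR C -> fsdZ [set gray v | v in C].
Proof.
move=> C_fsd w; have [g gK _] := gray_dual_bij.
rewrite (card_wt_imset _ _ gray_inj wtZ_gray) C_fsd -dualR_gray_dual.
exact: card_wt_imset _ _ (can_inj gK) wtR_gray_dual.
Qed.

End Gray.

Theorem theorem5p4 (m : nat) (M : 'M[R4u]_m) (alpha beta gamma : R4u) :
  circulant M -> (gamma = beta \/ gamma = ropp beta) ->
  fsdR (codeR (Gmat M alpha beta gamma)) /\
  fsdZ [set gray v | v in codeR (Gmat M alpha beta gamma)].
Proof.
move=> M_circ gamma_pm.
have [rho rhoK M_sym] := circulant_sym M_circ.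
have [eps eps_pm gamma_eps] :
    exists2 eps : Z4u, eps = 1 \/ eps = -1 & (gamma : Z4u) = eps * beta.
  case: gamma_pm => ->; first by exists 1; [left | rewrite mul1r].
  by exists (-1); [right | rewrite mulN1r].
have eps2 : eps * eps = 1 by case: eps_pm => ->; rewrite ?mulrNN mulr1.
have C_fsd : fsdR (codeR (Gmat M alpha beta gamma)).
  exact: fsdR_signed_sym (ext0K rhoK) (sign0_sign eps_pm)
                         (Bmat_sym alpha M_sym eps2 gamma_eps).
by split=> //; apply: fsdZ_gray C_fsd => v; apply: codeR_scale.
Qed.
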